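(* Let $A$ be a transitive permutation group on a finite set $\Omega_1$ and $B$ a transitive permutation group on a finite set $\Omega_2$, where $\Omega_1$ and $\Omega_2$ are disjoint. Let $N_A \trianglelefteq A$ and $N_B \trianglelefteq B$ be normal subgroups, and let $\phi \colon A/N_A \to B/N_B$ be a group isomorphism. Define \[ C=\{(a,b)\in A\times B : \phi(aN_A)=bN_B\}, \] regarded as a permutation group on $\Omega_1 \sqcup \Omega_2$, where $(a,b)$ acts as $a$ on $\Omega_1$ and as $b$ on $\Omega_2$. Call $N_A$ an essential kernel in $A$ if there is no proper transitive subgroup $M<A$ (transitive on $\Omega_1$) such that $N_A M=A$. If $N_A$ is not an essential kernel in $A$, then $C$ is not minimal as a two-orbit permutation group on $\Omega_1 \sqcup \Omega_2$; that is, $C$ has a proper subgroup that is transitive on both $\Omega_1$ and $\Omega_2$.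
   Context: A two-orbit permutation group $P$ acting on $\Omega = \Omega_1 \sqcup \Omega_2$ (with orbits $\Omega_1$ and $\Omega_2$) is called minimal if it has no proper subgroup that is transitive on both $\Omega_1$ and $\Omega_2$. The group $C$ in the statement projects surjectively onto $A$ and onto $B$ and therefore has exactly the two orbits $\Omega_1$ and $\Omega_2$. *)

From HB Require Import structures.
From mathcomp Require Import all_boot all_fingroup.
Set Implicit Arguments. Unset Strict Implicit. Unset Printing Implicit Defensive.
Local Open Scope group_scope.

Section SumPerm.
Variables (T1 T2 : finType).

Definition sum_fun (a : {perm T1}) (b : {perm T2}) (z : T1 + T2) : T1 + T2 :=
  match z with inl x => inl (a x) | inr y => inr (b y) end.

Lemma sum_fun_inj a b : injective (sum_fun a b).
Proof.
by case=> [x|y] [x'|y'] //= [] /perm_inj ->.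
Qed.

Definition sum_perm a b : {perm (T1 + T2)} := perm (@sum_fun_inj a b).

Definition Omega1 : {set T1 + T2} := [set inl x | x : T1].
Definition Omega2 : {set T1 + T2} := [set inr y | y : T2].

Definition fibre_prod (A : {group {perm T1}}) (B : {group {perm T2}})
  (NA : {group {perm T1}}) (NB : {group {perm T2}})
  (phi : {morphism (A / NA) >-> coset_of NB}) : {set {perm (T1 + T2)}} :=
  [set sum_perm ab.1 ab.2 | ab in setX A B & phi (coset NA ab.1) == coset NB ab.2].

End SumPerm.
Arguments fibre_prod {T1 T2} A B NA NB phi.

Definition essential_kernel (T : finType) (A N : {group {perm T}}) : Prop :=
  ~ exists M : {group {perm T}},
      [/\ M \proper A, [transitive M, on [set: T] | 'P] & N * M = A].

From mathcomp Require Import all_boot all_fingroup.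
From Stdlib Require Import Classical.
Set Implicit Arguments. Unset Strict Implicit. Unset Printing Implicit Defensive.
Local Open Scope group_scope.

(* Given M < A transitive with N_A M = A, the part of C lying over M,
   C_M = {(m, b) in M x B | phi(m N_A) = b N_B}, is a proper subgroup of C.
   It is transitive on Omega_1 because M is and every m has a partner b.
   It is transitive on Omega_2 because B is and, as A = N_A M, every coset
   a N_A contains some m in M, so every b in B has a partner in M. *)

Lemma atrans_lift (T U : finType) (h : T -> U)
    (G : {set {perm T}}) (S : {set {perm U}}) :
  [transitive G, on [set: T] | 'P] ->
  (forall a, a \in G -> exists2 g, g \in S & forall x, g (h x) = h (a x)) ->
  (forall g x, g \in S -> exists y, g (h x) = h y) ->
  [transitive S, on [set h x | x : T] | 'P].
Proof.
case/imsetP=> x0 _ orbit_x0 liftG stableS.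
apply/imsetP; exists (h x0); first exact: imset_f.
apply/setP=> u; apply/imsetP/orbitP => [[x _ ->] | [g Sg <-]].
- have /orbitP[a Ga <-] : x \in orbit 'P G x0 by rewrite -orbit_x0 inE.
  by have [g Sg gh] := liftG a Ga; exists g; rewrite //= apermE gh.
- by have [y gh] := stableS g x0 Sg; exists y; rewrite //= apermE gh.
Qed.

Section SumPerm.
Variables T1 T2 : finType.
Implicit Types (a : {perm T1}) (b : {perm T2}).

Lemma sum_permE a b z : sum_perm a b z = sum_fun a b z.
Proof. by rewrite permE. Qed.

Lemma sum_perm1 : sum_perm (1 : {perm T1}) (1 : {perm T2}) = 1.
Proof. by apply/permP=> -[x|y]; rewrite sum_permE /= !perm1. Qed.

Lemma sum_permM a a' b b' :
  sum_perm (a * a') (b * b') = sum_perm a b * sum_perm a' b'.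
Proof. by apply/permP=> -[x|y]; rewrite permM !sum_permE /= !permM. Qed.

Lemma sum_perm_inj a a' b b' :
  sum_perm a b = sum_perm a' b' -> a = a' /\ b = b'.
Proof.
move=> eq_ab; split; apply/permP.
- move=> x; have := congr1 (fun g : {perm _} => g (inl x)) eq_ab.
  by rewrite !sum_permE => -[].
- move=> y; have := congr1 (fun g : {perm _} => g (inr y)) eq_ab.
  by rewrite !sum_permE => -[].
Qed.

End SumPerm.

Section FibreProduct.
Variables (T1 T2 : finType).
Variables (A NA : {group {perm T1}}) (B NB : {group {perm T2}}).
Variable phi : {morphism (A / NA) >-> coset_of NB}.
Hypotheses (nNA : A \subset 'N(NA)) (nNB : B \subset 'N(NB)).
Hypothesis im_phi : phi @* (A / NA) = B / NB.

(* [fibre_set A] is convertible to [fibre_prod A B NA NB phi]; for M <= A,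
   [fibre_set M] is the part of it lying over M. *)
Definition fibre_set (M : {set {perm T1}}) : {set {perm (T1 + T2)}} :=
  [set sum_perm ab.1 ab.2
    | ab in setX M B & phi (coset NA ab.1) == coset NB ab.2].

Lemma mem_fibre_set (M : {set {perm T1}}) a b :
  (sum_perm a b \in fibre_set M) =
  [&& a \in M, b \in B & phi (coset NA a) == coset NB b].
Proof.
apply/imsetP/and3P => [[[a' b']] | [Ma Bb eq_ab]].
- by rewrite inE /= in_setX => /andP[/andP[Ma Bb] eq_ab] /sum_perm_inj[-> ->].
- by exists (a, b); rewrite // inE /= in_setX Ma Bb eq_ab.
Qed.

Lemma fibre_setP (M : {set {perm T1}}) g : g \in fibre_set M ->
  exists a b, [/\ a \in M, b \in B, phi (coset NA a) = coset NB b
                & g = sum_perm a b].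
Proof.
case/imsetP=> -[a b]; rewrite inE /= in_setX.
by move=> /andP[/andP[Ma Bb] /eqP eq_ab] ->; exists a, b.
Qed.

Lemma fibre_setS (M M' : {set {perm T1}}) :
  M \subset M' -> fibre_set M \subset fibre_set M'.
Proof.
move=> sMM'; apply/subsetP=> _ /fibre_setP[a [b [Ma Bb eq_ab ->]]].
by rewrite mem_fibre_set (subsetP sMM') ?Bb ?eq_ab ?eqxx.
Qed.

Lemma group_set_fibre (M : {group {perm T1}}) :
  M \subset A -> group_set (fibre_set M).
Proof.
move=> sMA; have nNM := subset_trans sMA nNA.
apply/group_setP; split.
  by rewrite -sum_perm1 mem_fibre_set !group1 !morph1 eqxx.
move=> g h /fibre_setP[a [b [Ma Bb eq_ab ->]]].
move=> /fibre_setP[a' [b' [Ma' Bb' eq_ab' ->]]].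
rewrite -sum_permM mem_fibre_set !groupM //.
rewrite !morphM ?mem_quotient ?(subsetP nNM) ?(subsetP sMA) ?(subsetP nNB) //.
by rewrite /= eq_ab eq_ab'.
Qed.

Definition fibre_group (M : {group {perm T1}}) (sMA : M \subset A) :=
  Group (group_set_fibre sMA).

Lemma partner_in_B a : a \in A ->
  exists2 b, b \in B & phi (coset NA a) = coset NB b.
Proof.
move=> Aa; have: phi (coset NA a) \in phi @* (A / NA).
  by rewrite mem_morphim ?mem_quotient.
by rewrite im_phi => /morphimP[b _ Bb ->]; exists b.
Qed.

Lemma partner_in_M (M : {group {perm T1}}) b : NA * M = A -> b \in B ->
  exists2 m, m \in M & phi (coset NA m) = coset NB b.
Proof.
move=> defA Bb.
have: coset NB b \in phi @* (A / NA) by rewrite im_phi mem_quotient.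
case/morphimP=> _ _ /morphimP[a _ Aa ->] ->.
have /mulsgP[n m NAn Mm ->] : a \in NA * M by rewrite defA.
by exists m; rewrite /= ?coset_kerl.
Qed.

Lemma fibre_set_proper (M : {group {perm T1}}) :
  M \proper A -> fibre_set M \proper fibre_set A.
Proof.
case/properP=> sMA [a Aa notMa]; apply/properP; split; first exact: fibre_setS.
have [b Bb eq_ab] := partner_in_B Aa.
exists (sum_perm a b); first by rewrite mem_fibre_set Aa Bb eq_ab eqxx.
by rewrite mem_fibre_set (negbTE notMa).
Qed.

Lemma atrans_fibre_Omega1 (M : {group {perm T1}}) :
  M \subset A -> [transitive M, on [set: T1] | 'P] ->
  [transitive fibre_set M, on Omega1 T1 T2 | 'P].
Proof.
move=> sMA trM; apply: atrans_lift trM _ _.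
- move=> a Ma; have [b Bb eq_ab] := partner_in_B (subsetP sMA a Ma).
  exists (sum_perm a b); first by rewrite mem_fibre_set Ma Bb eq_ab eqxx.
  by move=> x; rewrite sum_permE.
- move=> g x /fibre_setP[a [b [_ _ _ ->]]].
  by exists (a x); rewrite sum_permE.
Qed.

Lemma atrans_fibre_Omega2 (M : {group {perm T1}}) :
  NA * M = A -> [transitive B, on [set: T2] | 'P] ->
  [transitive fibre_set M, on Omega2 T1 T2 | 'P].
Proof.
move=> defA trB; apply: atrans_lift trB _ _.
- move=> b Bb; have [m Mm eq_mb] := partner_in_M defA Bb.
  exists (sum_perm m b); first by rewrite mem_fibre_set Mm Bb eq_mb eqxx.
  by move=> y; rewrite sum_permE.
- move=> g y /fibre_setP[a [b [_ _ _ ->]]].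
  by exists (b y); rewrite sum_permE.
Qed.

End FibreProduct.

Theorem mainTheorem1 (T1 T2 : finType)
  (A NA : {group {perm T1}}) (B NB : {group {perm T2}})
  (transA : [transitive A, on [set: T1] | 'P])
  (transB : [transitive B, on [set: T2] | 'P])
  (nNA : NA <| A) (nNB : NB <| B)
  (phi : {morphism (A / NA) >-> coset_of NB})
  (isophi : isom (A / NA) (B / NB) phi) :
  ~ essential_kernel A NA ->
  exists M : {group {perm (T1 + T2)}},
    [/\ M \proper fibre_prod A B NA NB phi,
        [transitive M, on Omega1 T1 T2 | 'P] &
        [transitive M, on Omega2 T1 T2 | 'P]].
Proof.
move=> /NNPP[M [ltMA trM defA]].
have sMA : M \subset A by case/andP: ltMA.
have nA := normal_norm nNA; have nB := normal_norm nNB.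
have im_phi := isom_im isophi.
exists (fibre_group phi nA nB sMA); split.
- exact: fibre_set_proper.
- exact: atrans_fibre_Omega1.
- exact: atrans_fibre_Omega2.
Qed.
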